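(* Let $\Omega$ be a convex domain in $\mathbb{R}^n$, let $\tau$ be a smooth symmetric $(0,2)$-tensor field on $\Omega$, and let $x_0\neq y_0$ be points of $\Omega$. Let $e_1,\dots,e_n$ be an orthonormal frame of $\mathbb{R}^n$ with $e_n=N(x_0,y_0)$, and let $\tilde E_n=(e_n,-e_n)\in\mathbb{R}^n\times\mathbb{R}^n$. Then $$\nabla_{\tilde E_n}\nabla_{\tilde E_n}E_{\tau}(x_0,y_0)=E_{\nabla_{e_n}\nabla_{e_n}\tau}(x_0,y_0).$$
   Context: For $x,y\in\mathbb{R}^n$ let $r(x,y)=\|x-y\|$, and for $x\neq y$ let $N(x,y)=\frac{y-x}{\|y-x\|}$ and $\theta(s,x,y)=x+sN(x,y)$. For a symmetric $(0,2)$-tensor field $\tau$ on $\Omega$, $E_\tau(x,y)=\int_0^{r(x,y)}\tau(\theta(s,x,y))(N(x,y),N(x,y))\,ds$, viewed as a function of $(x,y)\in\Omega\times\Omega$; $\nabla_{V}$ for $V\in\mathbb{R}^n\times\mathbb{R}^n$ denotes the directional derivative of a function of $(x,y)$ in direction $V$. $\nabla_{e_n}\nabla_{e_n}\tau$ is the second (Euclidean) covariant derivative of $\tau$ in direction $e_n$. *)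

From HB Require Import structures.
From mathcomp Require Import all_boot all_order all_algebra.
From mathcomp Require Import all_classical all_reals all_analysis.
Set Implicit Arguments. Unset Strict Implicit. Unset Printing Implicit Defensive.
Import Order.TTheory GRing.Theory Num.Theory.
Import numFieldNormedType.Exports.
Local Open Scope classical_set_scope.
Local Open Scope ring_scope.

Section Defs.
Variables (R : realType) (n : nat).
Notation V := 'rV[R]_n.

Definition edot (u v : V) : R := \sum_(i < n) u 0 i * v 0 i.
Definition enorm (u : V) : R := Num.sqrt (edot u u).

Definition rdist (x y : V) : R := enorm (x - y).
Definition Ndir (x y : V) : V := (enorm (y - x))^-1 *: (y - x).
Definition theta (s : R) (x y : V) : V := x + s *: Ndir x y.

(* a (0,2)-tensor field is represented by its matrix field in the
   standard basis: tau p (v,w) = v * (tau p) * w^T *)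
Definition tensor_app (A : 'M[R]_n) (v w : V) : R := (v *m A *m w^T) 0 0.

Definition Etau (tau : V -> 'M[R]_n) (xy : V * V) : R :=
  Rintegral (@lebesgue_measure R) `[0, rdist xy.1 xy.2]
    (fun s => tensor_app (tau (theta s xy.1 xy.2)) (Ndir xy.1 xy.2) (Ndir xy.1 xy.2)).

(* Euclidean second covariant derivative nabla_e nabla_e tau (entrywise) *)
Definition nabla2 (e : V) (tau : V -> 'M[R]_n) (p : V) : 'M[R]_n :=
  \matrix_(i, j) derive (fun q => derive (fun r => tau r i j) q e) p e.

Fixpoint Ck (k : nat) (O : set V) (f : V -> R) : Prop :=
  match k with
  | 0 => {in O, continuous f}
  | k'.+1 => {in O, continuous f} /\ (forall x, O x -> differentiable f x)
             /\ forall v : V, Ck k' O (fun x => derive f x v)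
  end.
Definition smooth_on (O : set V) (f : V -> R) : Prop := forall k, Ck k O f.

Definition orthonormal_frame (e : 'I_n -> V) : Prop :=
  forall i j, edot (e i) (e j) = (i == j)%:R.
End Defs.

From HB Require Import structures.
From mathcomp Require Import all_boot all_order all_algebra.
From mathcomp Require Import all_classical all_reals all_analysis.
From mathcomp Require Import ring lra.
Set Implicit Arguments. Unset Strict Implicit. Unset Printing Implicit Defensive.
Import Order.TTheory GRing.Theory Num.Theory.
Import numFieldNormedType.Exports.
Local Open Scope classical_set_scope.
Local Open Scope ring_scope.

(** Let [r = |y0 - x0|], [v = e_n] and [phi u = tau (x0 + u v) (v, v)].  Moving
    the two points in opposite directions along [v] keeps them on the line
    through [x0] and [y0], so for a primitive [Phi] of [phi] and small [t],
    [E_tau (x0 + t v, y0 - t v) = Phi (r - t) - Phi t].  Differentiating twice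
    at [t = 0] gives [phi' r - phi' 0].  Since [phi'] is the restriction of
    [(nabla_v tau)(v, v)] to the line and its derivative is
    [(nabla_v nabla_v tau)(v, v)], the fundamental theorem of calculus turns
    this difference into [E_(nabla_v nabla_v tau) (x0, y0)]. *)

Section derive_along_line.
Context {R : numFieldType} {V W : normedModType R}.
Variables (f : V -> W) (a v : V) (t : R).

Let line_quotient :
  (fun h : R => h^-1 *: (((fun s : R => f (a + s *: v)) \o shift t) (h *: 1)
                         - f (a + t *: v)))
  = (fun h : R => h^-1 *: ((f \o shift (a + t *: v)) (h *: v) - f (a + t *: v))).
Proof.
by apply/funext => h /=; rewrite [h *: 1]mulr1 scalerDl addrCA.
Qed.

Lemma derivable_line :
  derivable (fun s : R => f (a + s *: v)) t 1 = derivable f (a + t *: v) v.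
Proof. by rewrite /derivable line_quotient. Qed.

Lemma derive1_line :
  derive1 (fun s : R => f (a + s *: v)) t = 'D_v f (a + t *: v).
Proof. by rewrite derive1E /derive line_quotient. Qed.

Lemma is_derive_line : differentiable f (a + t *: v) ->
  is_derive t 1 (fun s : R => f (a + s *: v)) ('D_v f (a + t *: v)).
Proof.
move=> df; apply: DeriveDef; last by rewrite -derive1E derive1_line.
by rewrite derivable_line; exact: diff_derivable.
Qed.

Lemma continuous_line : {for a + t *: v, continuous f} ->
  {for t, continuous (fun s : R => f (a + s *: v))}.
Proof.
move=> cf; apply: (@continuous_comp _ _ _ (fun s : R => a + s *: v) f) => //.
by apply: continuousD; [exact: cst_continuous | exact: continuousZr_tmp].
Qed.

End derive_along_line.

Lemma derive2_line {R : numFieldType} {V : normedModType R}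
    (f : V -> R) (a v : V) :
  'D_v (fun p => 'D_v f p) a = derive1 (derive1 (fun s => f (a + s *: v))) 0.
Proof.
have -> : derive1 (fun s => f (a + s *: v)) = fun s => 'D_v f (a + s *: v).
  by apply/funext => s; rewrite derive1_line.
by rewrite (derive1_line (fun p => 'D_v f p)) scale0r addr0.
Qed.

Section primitives.
Context {R : realType}.
Notation mu := (@lebesgue_measure R).
Implicit Types (F f : R -> R) (a b d r u : R).

Lemma is_derive_continuous F u d : is_derive u 1 F d -> {for u, continuous F}.
Proof. by case=> /derivable1_diffP /differentiable_continuous. Qed.

Lemma exists_primitive f a b : a < b -> {in `[a, b], continuous f} ->
  exists F, {in `]a, b[, forall u, is_derive u 1 F (f u)}.
Proof.
move=> ab cf.
have intf : mu.-integrable `[a, b] (EFin \o f).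
  apply: continuous_compact_integrable; first exact: segment_compact.
  by apply: continuous_in_subspaceT => x /set_mem; exact: cf.
exists (fun x => \int[mu]_(t in `[a, x]) f t) => u uab.
move: (uab); rewrite in_itv /= => /andP[au ub].
have [dF <-] := continuous_FTC1_closed ub intf au (cf u (subset_itv_oo_cc uab)).
by rewrite derive1E; exact: derivableP.
Qed.

Lemma Rintegral_primitive F f a b : a < b ->
  {in `[a, b], forall u, is_derive u 1 F (f u)} -> {in `[a, b], continuous f} ->
  \int[mu]_(u in `[a, b]) f u = F b - F a.
Proof.
move=> ab dF cf.
have Fab u : u \in `[a, b] -> {for u, continuous F}.
  by move=> /dF; exact: is_derive_continuous.
have cf' : {within `[a, b], continuous f}.
  by apply: continuous_in_subspaceT => x /set_mem; exact: cf.
rewrite /Rintegral (@continuous_FTC2 _ f F _ _ ab cf') //.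
- split.
  + by move=> u /subset_itv_oo_cc /dF [].
  + by apply: cvg_at_right_filter; apply: Fab; rewrite in_itv /= lexx ltW.
  + by apply: cvg_at_left_filter; apply: Fab; rewrite in_itv /= lexx ltW.
- by move=> u /subset_itv_oo_cc /dF Du; rewrite derive1E derive_val.
Qed.

Lemma near_eq_derive1_derive1 (g G : R -> R) x : (\near x, g x = G x) ->
  derive1 (derive1 g) x = derive1 (derive1 G) x.
Proof.
move=> gG; rewrite !derive1E; apply: near_eq_derive.
apply: filterS (near_join gG) => y gGy.
by rewrite !derive1E (near_eq_derive _ gGy).
Qed.

Lemma is_derive_reflection F r u d :
  is_derive (r - u) 1 F d -> is_derive u 1 (fun t => F (r - t)) (- d).
Proof.
move=> dF; rewrite -[- d]mulrN1; apply: is_derive1_comp.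
by rewrite -[-1]sub0r; apply: is_deriveB.
Qed.

Lemma derive1_derive1_window F f (f' : R -> R) r :
  (\forall u \near 0, is_derive (u : R) 1 F (f u)) ->
  (\forall u \near r, is_derive (u : R) 1 F (f u)) ->
  is_derive (0 : R) 1 f (f' 0) -> is_derive r 1 f (f' r) ->
  derive1 (derive1 (fun t => F (r - t) - F t)) 0 = f' r - f' 0.
Proof.
move=> F0 Fr f0 fr.
have sub_cvg : (fun t => r - t) @ 0 --> r.
  by rewrite -[X in _ --> X]subr0; apply: cvgB; [exact: cvg_cst | exact: cvg_id].
have Fr' : \forall t \near 0, is_derive (r - t) 1 F (f (r - t)) := sub_cvg _ Fr.
have dG : \forall t \near 0,
    derive1 (fun t => F (r - t) - F t) t = - f (r - t) - f t.
  near=> t.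
  have dA : is_derive (r - t) 1 F (f (r - t)) by near: t; exact: Fr'.
  have dB : is_derive t 1 F (f t) by near: t; exact: F0.
  rewrite derive1E; apply: derive_val.
  exact: is_deriveB (is_derive_reflection dA) dB.
rewrite derive1E (near_eq_derive _ dG); apply: derive_val.
rewrite -[f' r]opprK; apply: is_deriveB => //; apply: is_deriveN.
by apply: is_derive_reflection; rewrite subr0.
Unshelve. all: by end_near. Qed.

End primitives.

Section euclidean.
Context {R : realType} {n : nat}.
Implicit Types (u v x y : 'rV[R]_n) (c : R).

Lemma edotZ c u : edot (c *: u) (c *: u) = c ^+ 2 * edot u u.
Proof. by rewrite /edot mulr_sumr; apply: eq_bigr => i _; rewrite !mxE; ring. Qed.

Lemma enormZ c u : enorm (c *: u) = `|c| * enorm u.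
Proof. by rewrite /enorm edotZ sqrtrM ?sqr_ge0 // sqrtr_sqr. Qed.

Lemma enormN u : enorm (- u) = enorm u.
Proof. by rewrite -scaleN1r enormZ normrN1 mul1r. Qed.

Lemma enorm_eq0 u : (enorm u == 0) = (u == 0).
Proof.
apply/idP/eqP => [|->]; last first.
  by rewrite /enorm /edot big1 ?sqrtr0 // => i _; rewrite mxE mul0r.
rewrite sqrtr_eq0 => u_le0; apply/rowP => i; rewrite mxE.
have sq_ge0 j : true -> 0 <= u 0 j * u 0 j by rewrite -expr2 sqr_ge0.
have edot0 : edot u u = 0 by apply/eqP; rewrite eq_le u_le0 sumr_ge0.
have /(_ i isT) /eqP := psumr_eq0P sq_ge0 edot0.
by rewrite mulf_eq0 orbb => /eqP.
Qed.

Lemma rdistC x y : rdist x y = rdist y x.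
Proof. by rewrite /rdist -opprB enormN. Qed.

Lemma add_rdist_Ndir x y : x != y -> x + rdist x y *: Ndir x y = y.
Proof.
move=> xy.
have yx_neq0 : enorm (y - x) != 0 by rewrite enorm_eq0 subr_eq0 eq_sym.
by rewrite rdistC /Ndir /rdist scalerA divff // scale1r addrC subrK.
Qed.

Lemma Ndir_line x v c : enorm v = 1 -> 0 < c -> Ndir x (x + c *: v) = v.
Proof.
move=> v1 c0; rewrite /Ndir addrC addKr enormZ v1 mulr1 gtr0_norm //.
by rewrite scalerA mulVf ?gt_eqF // scale1r.
Qed.

Lemma rdist_line x v c : enorm v = 1 -> 0 <= c -> rdist x (x + c *: v) = c.
Proof.
by move=> v1 c0; rewrite rdistC /rdist addrC addKr enormZ v1 mulr1 ger0_norm.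
Qed.

End euclidean.

Section tensor_along_line.
Context {R : realType} {n : nat}.
Implicit Types (O : set 'rV[R]_n) (f : 'rV[R]_n -> R)
  (M : 'rV[R]_n -> 'M[R]_n) (a v : 'rV[R]_n) (u : R).

Definition derive_mx M v : 'rV[R]_n -> 'M[R]_n :=
  fun p => \matrix_(i, j) 'D_v (fun q => M q i j) p.

Definition tensor_along M a v u : R := tensor_app (M (a + u *: v)) v v.

Lemma nabla2E v M : nabla2 v M = derive_mx (derive_mx M v) v.
Proof.
apply/funext => p; apply/matrixP => i j; rewrite !mxE.
by congr derive; apply/funext => q; rewrite mxE.
Qed.

Lemma tensor_appE (A : 'M[R]_n) (v w : 'rV[R]_n) :
  tensor_app A v w = \sum_i \sum_j v 0 i * w 0 j * A i j.
Proof.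
rewrite /tensor_app !mxE exchange_big; apply: eq_bigr => j _.
by rewrite !mxE mulr_suml; apply: eq_bigr => i _; rewrite mulrAC.
Qed.

Lemma smooth_on_continuous O f : smooth_on O f -> {in O, continuous f}.
Proof. by move=> /(_ 0%N). Qed.

Lemma smooth_on_differentiable O f x : smooth_on O f -> O x -> differentiable f x.
Proof. by move=> /(_ 1%N) [_ [df _]]; exact: df. Qed.

Lemma smooth_on_derive O f v : smooth_on O f -> smooth_on O (fun x => 'D_v f x).
Proof. by move=> sf k; have [_ [_]] := sf k.+1; exact. Qed.

Lemma smooth_on_derive_mx O M v : (forall i j, smooth_on O (fun p => M p i j)) ->
  forall i j, smooth_on O (fun p => derive_mx M v p i j).
Proof.
move=> sM i j; have := smooth_on_derive v (sM i j).
by congr smooth_on; apply/funext => p; rewrite mxE.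
Qed.

Lemma tensor_alongE M a v :
  tensor_along M a v = fun u => \sum_i \sum_j v 0 i * v 0 j * M (a + u *: v) i j.
Proof. by apply/funext => u; rewrite /tensor_along tensor_appE. Qed.

Lemma continuous_tensor_along O M a v u :
  (forall i j, smooth_on O (fun p => M p i j)) -> O (a + u *: v) ->
  {for u, continuous (tensor_along M a v)}.
Proof.
move=> sM Oauv; rewrite tensor_alongE.
apply: (cvg_big add_continuous) => // i _.
apply: (cvg_big add_continuous) => // j _.
apply: cvgMr; apply: (continuous_line (f := fun p => M p i j)).
exact: smooth_on_continuous (sM i j) _ (mem_set Oauv).
Qed.

Lemma is_derive_tensor_along O M a v u :
  (forall i j, smooth_on O (fun p => M p i j)) -> O (a + u *: v) ->
  is_derive u 1 (tensor_along M a v) (tensor_along (derive_mx M v) a v u).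
Proof.
move=> sM Oauv; rewrite !tensor_alongE -fct_sumE; apply: is_derive_sum => i.
rewrite -fct_sumE; apply: is_derive_sum => j; rewrite mxE.
apply: is_deriveZ; apply: (is_derive_line (f := fun p => M p i j)).
exact: smooth_on_differentiable (sM i j) Oauv.
Qed.

End tensor_along_line.

Lemma convex_line_segment {R : realType} {V : lmodType R} (O : set V)
    (x v : V) (r u : R) :
  convex_set O -> 0 < r -> O x -> O (x + r *: v) -> u \in `[0, r] ->
  O (x + u *: v).
Proof.
move=> cO r_gt0 Ox Oxr; rewrite in_itv /= => /andP[u_ge0 u_le_r].
have u0 : 0 <= u / r by rewrite divr_ge0 // ltW.
have u1 : u / r <= 1 by rewrite ler_pdivrMr // mul1r.
have := cO _ _ (Itv01 u0 u1) (mem_set Oxr) (mem_set Ox); rewrite inE; congr O.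
rewrite /= /conv /= scalerDr scalerA divfK ?gt_eqF // scalerBl scale1r.
by rewrite addrC addrA subrK.
Qed.

Lemma open_convex_segment_nbhs {R : realType} {V : normedModType R} (O : set V)
    (x v : V) (r : R) :
  open O -> convex_set O -> 0 < r -> O x -> O (x + r *: v) ->
  exists2 d, 0 < d & {in `[- d, r + d], forall u, O (x + u *: v)}.
Proof.
move=> oO cO r_gt0 Ox Oxr.
have ball_in w : O (x + w *: v) ->
    exists2 d, 0 < d & forall u, `|u - w| < d -> O (x + u *: v).
  move=> Ow; have : open [set u : R | O (x + u *: v)].
    apply: (@open_comp _ _ (fun u : R => x + u *: v)) => // u _.
    apply: (@continuousD _ _ _ (cst x) (fun u : R => u *: v)).
      exact: cst_continuous.
    exact: continuousZr_tmp.
  rewrite openE => /(_ w Ow) /nbhs_ballP [d d_gt0 Bd].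
  by exists d => // u uw; apply: Bd; rewrite /ball /= distrC.
have Ox0v : O (x + 0 *: v) by rewrite scale0r addr0.
have [d0 d0_gt0 B0] := ball_in 0 Ox0v.
have [d1 d1_gt0 B1] := ball_in r Oxr.
exists (Num.min d0 d1 / 2) => [|u]; first by rewrite divr_gt0 // lt_min d0_gt0.
have [dd0 dd1] : Num.min d0 d1 <= d0 /\ Num.min d0 d1 <= d1.
  by rewrite !ge_min !lexx orbT.
rewrite in_itv /= => /andP[du ud].
have [u_lt0|u_ge0] := ltP u 0; first by apply: B0; rewrite subr0 ltr_norml; lra.
have [r_lt_u|u_le_r] := ltP r u; first by apply: B1; rewrite ltr_norml; lra.
by apply: (convex_line_segment cO r_gt0 Ox Oxr); rewrite in_itv /= u_ge0 u_le_r.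
Qed.

Lemma Etau_line {R : realType} {n : nat} (tau : 'rV[R]_n -> 'M[R]_n)
    (x v : 'rV[R]_n) (F : R -> R) (a b : R) :
  enorm v = 1 -> a < b ->
  {in `[a, b], forall u : R, is_derive u 1 F (tensor_along tau x v u)} ->
  {in `[a, b], continuous (tensor_along tau x v)} ->
  Etau tau (x + a *: v, x + b *: v) = F b - F a.
Proof.
move=> v1 ab dF cphi.
have shift_in s : s \in `[0, b - a] -> s + a \in `[a, b].
  by rewrite !in_itv /= => /andP[s0 sba]; apply/andP; split; lra.
have -> : x + b *: v = (x + a *: v) + (b - a) *: v.
  by rewrite scalerBl addrA addrAC addrK.
rewrite /Etau /= rdist_line ?subr_ge0 ?ltW // /theta Ndir_line ?subr_gt0 //.
have -> : (fun s => tensor_app (tau (x + a *: v + s *: v)) v v)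
    = tensor_along tau x v \o shift a.
  by apply/funext => s; rewrite /= /tensor_along scalerDl [s *: v + _]addrC addrA.
rewrite (@Rintegral_primitive _ (F \o shift a)) ?subr_gt0 //= ?subrK ?add0r //.
- move=> s /shift_in /dF dFs; rewrite -[X in is_derive _ _ _ X]mulr1.
  exact: (is_derive1_comp (g := shift a) dFs (is_derive_shift _ _ _)).
- move=> s /shift_in /cphi cs; apply: continuous_comp => //.
  by apply: continuousD; [exact: cvg_id | exact: cst_continuous].
Qed.

Section Etau_along_segment.
Context {R : realType} {n : nat}.
Variables (O : set 'rV[R]_n) (tau : 'rV[R]_n -> 'M[R]_n) (x v : 'rV[R]_n) (r : R).
Hypotheses (oO : open O) (cO : convex_set O)
  (smooth_tau : forall i j, smooth_on O (fun p => tau p i j))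
  (v1 : enorm v = 1) (r_gt0 : 0 < r) (Ox : O x) (Oxr : O (x + r *: v)).

Lemma Etau_window : exists F : R -> R,
  [/\ \forall u \near 0, is_derive (u : R) 1 F (tensor_along tau x v u),
      \forall u \near r, is_derive (u : R) 1 F (tensor_along tau x v u) &
      \forall t \near 0,
        Etau tau ((x, x + r *: v) + t *: (v, - v)) = F (r - t) - F t].
Proof.
(* [lra] ignores section hypotheses. *)
have r_pos := r_gt0.
have [d d_gt0 Od] := open_convex_segment_nbhs oO cO r_gt0 Ox Oxr.
have [F dF] : exists F : R -> R,
    {in `]- d, r + d[, forall u : R, is_derive u 1 F (tensor_along tau x v u)}.
  apply: exists_primitive; first lra.
  by move=> u /Od; exact: continuous_tensor_along smooth_tau.
have near_dF u : u \in `]- d, r + d[ ->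
    \forall z \near u, is_derive (z : R) 1 F (tensor_along tau x v z).
  by move=> /near_in_itvoo; apply: filterS => z /dF.
exists F; split; [apply: near_dF; rewrite in_itv /=; apply/andP; split; lra..|].
have : (0 : R) \in `]- d, r / 2[ by rewrite in_itv /=; apply/andP; split; lra.
move=> /near_in_itvoo; apply: filterS => t; rewrite in_itv /= => /andP[dt tr].
have -> : (x, x + r *: v) + t *: (v, - v) = (x + t *: v, x + (r - t) *: v).
  by congr pair; rewrite /= scalerBl scalerN addrA.
have window u : u \in `[t, r - t] -> u \in `]- d, r + d[.
  by rewrite !in_itv /= => /andP[tu ur]; apply/andP; split; lra.
apply: Etau_line => //; first lra.
- by move=> u /window; exact: dF.
- move=> u /window /subset_itv_oo_cc /Od.
  exact: continuous_tensor_along smooth_tau.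
Qed.

Lemma derive2_Etau_line :
  'D_(v, - v) (fun z => 'D_(v, - v) (Etau tau) z) (x, x + r *: v)
  = tensor_along (derive_mx tau v) x v r - tensor_along (derive_mx tau v) x v 0.
Proof.
have [F [F0 Fr EF]] := Etau_window.
have Ox0 : O (x + 0 *: v) by rewrite scale0r addr0.
rewrite derive2_line (near_eq_derive1_derive1 EF).
exact: derive1_derive1_window F0 Fr
  (is_derive_tensor_along smooth_tau Ox0) (is_derive_tensor_along smooth_tau Oxr).
Qed.

Lemma Etau_derive_mx_line (M : 'rV[R]_n -> 'M[R]_n) :
  (forall i j, smooth_on O (fun p => M p i j)) ->
  Etau (derive_mx M v) (x, x + r *: v)
  = tensor_along M x v r - tensor_along M x v 0.
Proof.
move=> sM.
have -> : (x, x + r *: v) = (x + 0 *: v, x + r *: v) by rewrite scale0r addr0.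
apply: Etau_line => // u /(convex_line_segment cO r_gt0 Ox Oxr) Ouv.
- exact: is_derive_tensor_along sM Ouv.
- exact: continuous_tensor_along (smooth_on_derive_mx v sM) Ouv.
Qed.

End Etau_along_segment.

Theorem theorem2p5 (R : realType) (n : nat) (Omega : set 'rV[R]_n.+1)
  (tau : 'rV[R]_n.+1 -> 'M[R]_n.+1) (x0 y0 : 'rV[R]_n.+1)
  (e : 'I_n.+1 -> 'rV[R]_n.+1) :
  open Omega -> convex_set Omega ->
  (forall i j, smooth_on Omega (fun p => tau p i j)) ->
  (forall p, Omega p -> (tau p)^T = tau p) ->
  Omega x0 -> Omega y0 -> x0 != y0 ->
  orthonormal_frame e -> e ord_max = Ndir x0 y0 ->
  let En := (e ord_max, - e ord_max) in
  derive (fun xy => derive (Etau tau) xy En) (x0, y0) En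
  = Etau (nabla2 (e ord_max) tau) (x0, y0).
Proof.
move=> oO cO sm _ Ox0 Oy0 x0y0 ortho eE En; rewrite /En.
set v := e ord_max in eE *.
have v1 : enorm v = 1 by rewrite /enorm ortho eqxx sqrtr1.
have [r r_gt0 y0E] : exists2 r, 0 < r & y0 = x0 + r *: v.
  exists (rdist x0 y0); last by rewrite eE add_rdist_Ndir.
  by rewrite lt_neqAle eq_sym enorm_eq0 subr_eq0 x0y0 sqrtr_ge0.
rewrite y0E in Oy0 *.
rewrite (derive2_Etau_line oO cO) // nabla2E (Etau_derive_mx_line cO) //.
exact: smooth_on_derive_mx.
Qed.
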